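(* Let $G$ be a group satisfying the property $\mathsf{FM}$ and $\nu$ a conjugation-invariant pseudo-norm on $G$. Then $A_\nu$, with addition $[\mathtt{g}]+[\mathtt{h}]=[\mathtt{g}\cdot\mathtt{h}]$ and scalar multiplication $\lambda[\mathtt{g}]=[\mathtt{g}^{(\lambda)}]$, is a real vector space, and the function $\|[\mathtt{g}]\|_\nu=\|\mathtt{g}\|_\nu$ is a norm on it; i.e. $(A_\nu,\|\cdot\|_\nu)$ is a normed vector space.
   Context: A conjugation-invariant pseudo-norm on a group $G$ is a function $\nu\colon G\to\mathbb{R}_{\ge0}$ with $\nu(1)=0$, $\nu(f)=\nu(f^{-1})$, $\nu(fg)\le\nu(f)+\nu(g)$ and $\nu(gfg^{-1})=\nu(f)$ for all $f,g\in G$. Property $\mathsf{FM}$: for a subgroup $H\le G$, let $\nu_H(f)$ be the minimal $k$ such that $f=g_1h_1g_1^{-1}\cdots g_kh_kg_k^{-1}$ ($g_i\in G,h_i\in H$), $\infty$ if none; for $K\subset G$ let $\mathrm{D}^f_H(K)$ be the set of $h_0\in G$ such that for all $g_1,\dots,g_k\in G$ there is $h\in G$ with every element of $hh_0h^{-1}K(hh_0h^{-1})^{-1}$ commuting with every element of $\bigcup_i g_iHg_i^{-1}$. $(G,H)$ satisfies $\mathsf{FM}$ if $\nu_H<\infty$ on $G$ and $\mathrm{D}^f_H(h_1Hh_1^{-1}\cup\dots\cup h_kHh_k^{-1})\ne\emptyset$ for all $h_1,\dots,h_k\in G$; $G$ satisfies $\mathsf{FM}$ if some $(G,H)$ does.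 $A_G=\coprod_{k\ge0}(G\times\mathbb{R})^k$, whose elements are written as formal words $g_1^{s_1}\cdots g_k^{s_k}$, with empty word $1$. For $\mathtt{g}=g_1^{s_1}\cdots g_k^{s_k}$, $\mathtt{h}=h_1^{t_1}\cdots h_l^{t_l}$, $\lambda\in\mathbb{R}$: $\mathtt{g}\cdot\mathtt{h}$ is concatenation, $\bar{\mathtt{g}}=g_k^{-s_k}\cdots g_1^{-s_1}$, $\mathtt{g}^{(\lambda)}=g_1^{\lambda s_1}\cdots g_k^{\lambda s_k}$. $\|\mathtt{g}\|_\nu=\lim_{n\to\infty}\frac1n\nu(g_1^{[s_1n]}\cdots g_k^{[s_kn]})$ ($[\cdot]$ integer part), $\|1\|_\nu=0$. $\mathtt{g}\sim\mathtt{h}$ iff $\|\mathtt{g}\cdot\bar{\mathtt{h}}\|_\nu=0$; $A_\nu=A_G/\sim$. *)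

From HB Require Import structures.
From mathcomp Require Import all_boot all_order all_algebra.
From mathcomp Require Import all_classical all_reals all_analysis.

Set Implicit Arguments.
Unset Strict Implicit.
Unset Printing Implicit Defensive.

Import Order.TTheory GRing.Theory Num.Theory.
Import numFieldNormedType.Exports.
Local Open Scope classical_set_scope.

Section GroupDefs.
Local Open Scope group_scope.
Variable G : groupType.

Definition prod_seq (s : seq G) : G := foldr (fun x acc => x * acc) 1 s.

Definition gpowz (x : G) (z : int) : G :=
  match z with Posz n => x ^+ n | Negz n => (x ^+ n.+1)^-1 end.

Definition is_subgroup (H : set G) : Prop :=
  H 1 /\ (forall x y, H x -> H y -> H (x * y)) /\ (forall x, H x -> H x^-1).

(* f = g_1 h_1 g_1^-1 ... g_k h_k g_k^-1 with h_i in H, i.e. nu_H(f) < oo *)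
Definition conj_prod_of (H : set G) (f : G) : Prop :=
  exists s : seq (G * G), (forall p, p \in s -> H p.2) /\
    f = prod_seq (map (fun p => p.1 * p.2 * p.1^-1) s).

Definition conj_union (H : set G) (gs : seq G) : set G :=
  fun x => exists2 g, g \in gs & exists2 y, H y & x = g * y * g^-1.

Definition Df (H : set G) (K : set G) : set G :=
  fun h0 => forall gs : seq G, exists h : G,
    let c := h * h0 * h^-1 in
    forall k x, K k -> conj_union H gs x ->
      commute (c * k * c^-1) x.

Definition FM_pair (H : set G) : Prop :=
  is_subgroup H /\ (forall f, conj_prod_of H f) /\
  (forall hs : seq G, Df H (conj_union H hs) !=set0).

Definition FM : Prop := exists H : set G, FM_pair H.

End GroupDefs.

Section Words.
Local Open Scope ring_scope.
Variables (R : realType) (G : groupType).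

Definition is_ci_pseudonorm (nu : G -> R) : Prop :=
  [/\ nu 1%g = 0,
      (forall f, 0 <= nu f),
      (forall f, nu f = nu (f^-1)%g),
      (forall f g, nu (f * g)%g <= nu f + nu g) &
      (forall f g, nu (g * f * g^-1)%g = nu f)].

(* elements of A_G : formal words g_1^{s_1} ... g_k^{s_k} *)
Definition word := seq (G * R).

Definition wconcat (w1 w2 : word) : word := w1 ++ w2.
Definition wbar (w : word) : word := rev (map (fun p => (p.1, - p.2)) w).
Definition wscale (l : R) (w : word) : word := map (fun p => (p.1, l * p.2)) w.

Definition weval (n : nat) (w : word) : G :=
  prod_seq (map (fun p => gpowz p.1 (Num.floor (p.2 * n%:R))) w).

Definition wseq (nu : G -> R) (w : word) : R^nat :=
  fun n => nu (weval n w) / n%:R.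

Definition wnorm (nu : G -> R) (w : word) : R := lim (wseq nu w @ \oo).

Definition wequiv (nu : G -> R) (w1 w2 : word) : Prop :=
  wnorm nu (wconcat w1 (wbar w2)) = 0.

(* "(A_nu, ||.||_nu) is a normed real vector space", unfolded:
   the limits defining ||.||_nu exist, ~ is an equivalence relation,
   addition and scalar multiplication descend to A_nu = A_G/~ and satisfy
   the vector-space axioms there, ||.||_nu descends to A_nu and is a norm. *)
Definition A_nu_normed_vector_space (nu : G -> R) : Prop :=
  let eqv := wequiv nu in
  let nrm := wnorm nu in
  (forall w, cvg (wseq nu w @ \oo)) /\
  (forall w, eqv w w) /\
  (forall w1 w2, eqv w1 w2 -> eqv w2 w1) /\
  (forall w1 w2 w3, eqv w1 w2 -> eqv w2 w3 -> eqv w1 w3) /\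
  (forall w1 w1' w2 w2', eqv w1 w1' -> eqv w2 w2' ->
     eqv (wconcat w1 w2) (wconcat w1' w2')) /\
  (forall l w w', eqv w w' -> eqv (wscale l w) (wscale l w')) /\
  (forall w1 w2 w3, eqv (wconcat (wconcat w1 w2) w3) (wconcat w1 (wconcat w2 w3))) /\
  (forall w1 w2, eqv (wconcat w1 w2) (wconcat w2 w1)) /\
  (forall w, eqv (wconcat [::] w) w) /\
  (forall w, exists w', eqv (wconcat w w') [::]) /\
  (forall a b w, eqv (wscale a (wscale b w)) (wscale (a * b) w)) /\
  (forall w, eqv (wscale 1 w) w) /\
  (forall a w1 w2, eqv (wscale a (wconcat w1 w2))
                        (wconcat (wscale a w1) (wscale a w2))) /\
  (forall a b w, eqv (wscale (a + b) w) (wconcat (wscale a w) (wscale b w))) /\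
  (forall w w', eqv w w' -> nrm w = nrm w') /\
  (forall w, 0 <= nrm w) /\
  (forall w, nrm w = 0 <-> eqv w [::]) /\
  (forall a w, nrm (wscale a w) = `|a| * nrm w) /\
  (forall w1 w2, nrm (wconcat w1 w2) <= nrm w1 + nrm w2).

End Words.

From HB Require Import structures.
From mathcomp Require Import all_boot all_order all_algebra.
From mathcomp Require Import all_classical all_reals all_analysis.
From mathcomp Require Import ring lra.

(* FM gives, for every finite S, an element c such that c<S>c^-1 centralizes
   <S>; writing x = (x (c x c^-1)^-1) (c x c^-1) then bounds nu on all
   commutators of <S> by 4 nu(c).  The element representing a word at time
   n + m differs from the product of those at times n and m by a bounded
   amount: the exponents [s(n + m)] and [sn] + [sm] differ by at most one,
   and reordering the product costs at most (length of the word) commutators.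
   So n |-> nu(weval n w) is subadditive up to a constant and ||w|| exists by
   Fekete's lemma.  In the same way every vector space identity and every
   norm property holds in G up to an error of bounded nu, which vanishes
   after division by n; for homogeneity with l > 0, weval n (l w) is compared
   with weval [l n] w. *)

Set Implicit Arguments.
Unset Strict Implicit.
Unset Printing Implicit Defensive.
Import Order.TTheory GRing.Theory Num.Theory.
Import numFieldNormedType.Exports.
Local Open Scope classical_set_scope.

Section GroupFacts.
Local Open Scope group_scope.
Variable G : groupType.
Implicit Types (x y : G) (S : seq G).

Lemma prod_seqE (s : seq G) : prod_seq s = \prod_(x <- s) x.
Proof. exact: foldrE. Qed.

Lemma gpowz_subn x (m n : nat) : gpowz x (m%:Z - n%:Z)%R = x ^+ m * (x ^+ n)^-1.
Proof.
case: (leqP n m) => [le_nm | /ltnW le_mn].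
  by rewrite subzn // -{2}(subnK le_nm) expgnDr mulgK.
rewrite -opprB subzn //; case: (n - m)%N (subnK le_mn) => [<-|k <-] /=.
  by rewrite mulgV.
by rewrite expgnDr invgM mulgA mulgV mul1g.
Qed.

Lemma gpowzD x (a b : int) : gpowz x (a + b)%R = gpowz x a * gpowz x b.
Proof.
have natsub (c : int) : exists m n : nat, c = (m%:Z - n%:Z)%R.
  case: c => n; first by exists n, 0%N; rewrite subr0.
  by exists 0%N, n.+1; rewrite NegzE sub0r.
have [m1 [n1 ->]] := natsub a; have [m2 [n2 ->]] := natsub b.
have -> : (m1%:Z - n1%:Z + (m2%:Z - n2%:Z) = (m1 + m2)%N%:Z - (n1 + n2)%N%:Z)%R.
  by rewrite !PoszD; ring.
rewrite !gpowz_subn !expgnDr invgM -!mulgA; congr (_ * _).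
have commXV (i j : nat) : commute (x ^+ i) ((x ^+ j)^-1) by apply/commuteV/commuteX2.
have commVV (i j : nat) : commute ((x ^+ i)^-1) ((x ^+ j)^-1).
  by apply/commuteV/commute_sym/commXV.
by rewrite (commVV n2 n1) mulgA (commXV m2 n1) -mulgA.
Qed.

Lemma gpowzN x (a : int) : gpowz x (- a)%R = (gpowz x a)^-1.
Proof. by apply/esym/mulg1_eq; rewrite -gpowzD subrr. Qed.

Inductive generated S : G -> Prop :=
| generated_mem x : x \in S -> generated S x
| generated1 : generated S 1
| generatedM x y : generated S x -> generated S y -> generated S (x * y)
| generatedV x : generated S x -> generated S x^-1.

Lemma generated_subgroup S : is_subgroup (generated S).
Proof.
by split; [exact: generated1 | split; [exact: generatedM | exact: generatedV]].
Qed.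

Lemma generated_min S (T : set G) :
  is_subgroup T -> (forall x, x \in S -> T x) -> forall x, generated S x -> T x.
Proof.
move=> [T1 [TM TV]] ST x.
by elim=> [y /ST | | y z _ Ty _ Tz | y _ Ty] //; [exact: TM | exact: TV].
Qed.

Lemma subgroup_prod (I : eqType) (T : set G) (r : seq I) (F : I -> G) :
  is_subgroup T -> (forall i, i \in r -> T (F i)) -> T (\prod_(i <- r) F i).
Proof. by move=> [T1 [TM _]] rT; rewrite big_seq; apply: big_ind => // i /rT. Qed.

Lemma generated_sub S S' x : {subset S <= S'} -> generated S x -> generated S' x.
Proof.
move=> sub; apply: generated_min => [|y /sub]; first exact: generated_subgroup.
exact: generated_mem.
Qed.

Lemma generated_gpowz S x a : generated S x -> generated S (gpowz x a).
Proof.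
have genX n : generated S x -> generated S (x ^+ n).
  move=> Sx; elim: n => [|n IH]; first exact: generated1.
  by rewrite expgS; exact: generatedM.
by case: a => n Sx /=; [exact: genX | exact/generatedV/genX].
Qed.

Definition centralizer (T : set G) : set G := fun y => forall x, T x -> commute x y.

Lemma centralizer_subgroup (T : set G) : is_subgroup (centralizer T).
Proof.
split; first by move=> x _; exact: commute1.
by split=> [y z Cy Cz x Tx | y Cy x Tx]; [apply: commuteM | apply: commuteV]; auto.
Qed.

Lemma conj_preim_subgroup (T : set G) c :
  is_subgroup T -> is_subgroup (fun x => T (c * x * c^-1)).
Proof.
move=> [T1 [TM TV]]; split; first by rewrite mulg1 mulgV.
split=> [x y Tx Ty | x Tx].
  by have := TM _ _ Tx Ty; rewrite !mulgA mulgVK.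
by have := TV _ Tx; rewrite !invgM invgK mulgA.
Qed.

Lemma commutator_mulr_commute u x y :
  commute x y -> (u * x) * y * (u * x)^-1 * y^-1 = u * y * u^-1 * y^-1.
Proof. by move=> cxy; rewrite invgM !mulgA -(mulgA u x y) cxy !mulgA mulgK. Qed.

Lemma conj_union_sub (H : set G) hs hs' k :
  {subset hs <= hs'} -> conj_union H hs k -> conj_union H hs' k.
Proof. by move=> sub [g /sub g_hs' Hk]; exists g. Qed.

Lemma conj_prod_common (H : set G) S : (forall f, conj_prod_of H f) ->
  exists hs, forall g, g \in S ->
    exists2 s : seq G, (forall k, k \in s -> conj_union H hs k)
                     & g = \prod_(k <- s) k.
Proof.
move=> H_cover; elim: S => [|g S [hs IH]]; first by exists [::].
have [s [sH ->]] := H_cover g.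
exists (map fst s ++ hs) => g'; rewrite in_cons => /predU1P[-> | /IH[s' s'K ->]].
  exists [seq p.1 * p.2 * p.1^-1 | p <- s]; last by rewrite prod_seqE.
  move=> _ /mapP[p ps ->]; exists p.1; first by rewrite mem_cat map_f.
  by exists p.2; [exact: sH |].
exists s' => // k /s'K; apply: conj_union_sub => h hh.
by rewrite mem_cat hh orbT.
Qed.

Lemma FM_conj_commute : FM G -> forall S, exists c : G,
  forall x y, generated S x -> generated S y -> commute (c * x * c^-1) y.
Proof.
move=> [H [_ [H_cover H_Df]]] S.
have [hs S_prod] := conj_prod_common S H_cover.
set K := conj_union H hs in S_prod.
have [h0 Dh0] := H_Df hs; have [h Kcomm] := Dh0 hs.
set c := h * h0 * h^-1 in Kcomm; exists c.
(* [c K c^-1] commutes with [K], and every generator is a product of elements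
   of [K]; close under products in the conjugated argument, then in the other. *)
have conj_centK : forall x, generated S x -> centralizer K (c * x * c^-1).
  apply: (generated_min (T := fun x => centralizer K (c * x * c^-1))).
    exact/conj_preim_subgroup/centralizer_subgroup.
  move=> _ /S_prod[s sK ->].
  apply: (subgroup_prod (T := fun x => centralizer K (c * x * c^-1))) => [|k ks].
    exact/conj_preim_subgroup/centralizer_subgroup.
  by move=> y Ky; apply/commute_sym/Kcomm; [exact: sK |].
have cent_conj : forall y, generated S y ->
    centralizer ((fun x => c * x * c^-1) @` generated S) y.
  apply: generated_min; first exact: centralizer_subgroup.
  move=> _ /S_prod[s sK ->]; apply: subgroup_prod; first exact: centralizer_subgroup.
  by move=> k ks _ [x Sx <-]; apply/commute_sym/conj_centK/sK.
by move=> x y Sx Sy; apply: cent_conj => //; exists x.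
Qed.

End GroupFacts.

Section PseudoNorm.
Local Open Scope ring_scope.
Variables (R : realType) (G : groupType) (nu : G -> R).
Hypothesis nu_ci : is_ci_pseudonorm nu.
Implicit Types x y z : G.

Lemma nu1 : nu 1%g = 0. Proof. by case: nu_ci. Qed.
Lemma nu_ge0 x : 0 <= nu x. Proof. by case: nu_ci. Qed.
Lemma nuV x : nu x^-1%g = nu x.
Proof. by case: nu_ci => _ _ nuV _ _; rewrite -nuV. Qed.
Lemma nuM_le x y : nu (x * y)%g <= nu x + nu y. Proof. by case: nu_ci. Qed.
Lemma nuJ x y : nu (y * x * y^-1)%g = nu x. Proof. by case: nu_ci. Qed.

Lemma nuC x y : nu (x * y)%g = nu (y * x)%g.
Proof. by rewrite -(nuJ (y * x) x) !mulgA mulgK. Qed.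

Lemma nu_insert_le x y z : nu (x * z * y)%g <= nu (x * y)%g + nu z.
Proof.
have -> : (x * z * y = (x * y) * (y^-1 * z * y))%g by rewrite !mulgA mulgK.
by rewrite -[X in _ + X](nuJ z y^-1) invgK; apply: nuM_le.
Qed.

Lemma nu_div_le x y : nu x <= nu (x * y^-1)%g + nu y.
Proof. by rewrite -{1}(mulgVK y x); apply: nuM_le. Qed.

Lemma nu_triangle x y z : nu (x * z)%g <= nu (x * y^-1)%g + nu (y * z)%g.
Proof. by rewrite -{1}(mulgVK y x) -mulgA; apply: nuM_le. Qed.

Lemma nuMVV x y : nu (x^-1 * y^-1)%g = nu (y * x)%g.
Proof. by rewrite -invgM nuV. Qed.

Lemma nu_dist_le x y : `|nu x - nu y| <= nu (x * y^-1)%g.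
Proof.
have := nu_div_le x y; have := nu_div_le y x.
rewrite -(nuV (y * x^-1)) invgM invgK ler_norml => *; apply/andP; split; lra.
Qed.

Lemma nu_commutator_le x y : nu (x * y * x^-1 * y^-1)%g <= nu x + nu x.
Proof.
have -> : (x * y * x^-1 * y^-1 = x * (y * x^-1 * y^-1))%g by rewrite !mulgA.
by rewrite (le_trans (nuM_le _ _)) // nuJ nuV.
Qed.

Lemma nu_expg_le x n : nu (x ^+ n)%g <= n%:R * nu x.
Proof.
elim: n => [|n IH]; first by rewrite expg0 nu1 mul0r.
by rewrite expgS (le_trans (nuM_le _ _)) // mulrSr mulrDl mul1r addrC lerD2r.
Qed.

Lemma nu_gpowz_le x (a : int) : nu (gpowz x a) <= `|a%:~R| * nu x.
Proof.
case: a => n /=; last rewrite nuV NegzE mulrNz normrN.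
all: by rewrite ger0_norm ?ler0n //; exact: nu_expg_le.
Qed.

Lemma nu_prod_div_le (l : seq (G * G)) :
  nu (\prod_(p <- l) p.1 * (\prod_(p <- l) p.2)^-1)%g
    <= \sum_(p <- l) nu (p.1 * p.2^-1)%g.
Proof.
elim: l => [|[x y] l IH]; first by rewrite !big_nil invg1 mulg1 nu1.
rewrite !big_cons /= invgM.
set X := (\prod_(p <- l) p.1)%g; set Y := (\prod_(p <- l) p.2)%g.
have -> : (x * X * (Y^-1 * y^-1) = x * ((X * Y^-1) * (y^-1 * x)) * x^-1)%g.
  by rewrite !mulgA mulgK.
by rewrite nuJ (le_trans (nuM_le _ _)) // addrC nuC lerD2l.
Qed.

Definition commutators_bounded S (D : R) :=
  forall x y, generated S x -> generated S y -> nu (x * y * x^-1 * y^-1)%g <= D.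

Lemma FM_commutator_bound : FM G -> forall S, exists D, commutators_bounded S D.
Proof.
move=> FMG S; have [c c_comm] := FM_conj_commute FMG S.
exists (4 * nu c) => x y Sx Sy.
set u := (x * (c * x * c^-1)^-1)%g.
have -> : (x * y * x^-1 * y^-1 = u * y * u^-1 * y^-1)%g.
  have xE : x = (u * (c * x * c^-1))%g by rewrite mulgVK.
  by rewrite {1 2}xE commutator_mulr_commute //; exact: c_comm.
have nu_u : nu u <= nu c + nu c.
  by rewrite /u !invgM invgK !mulgA (le_trans (nuM_le _ _)) // nuJ nuV.
by apply: (le_trans (nu_commutator_le _ _)); lra.
Qed.

Lemma nu_prod_reorder_le S D (l : seq (G * G)) : commutators_bounded S D ->
  (forall p, p \in l -> generated S p.1 /\ generated S p.2) ->
  nu (\prod_(p <- l) p.1 * \prod_(p <- l) p.2 * (\prod_(p <- l) (p.1 * p.2))^-1)%g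
    <= (size l)%:R * D.
Proof.
move=> comm_le; elim: l => [|[x y] l IH] l_gen.
  by rewrite !big_nil invg1 !mulg1 nu1 mul0r.
have [Sx Sy] := l_gen _ (mem_head _ _).
have {}l_gen p : p \in l -> generated S p.1 /\ generated S p.2.
  by move=> pl; apply: l_gen; rewrite in_cons pl orbT.
rewrite !big_cons /=.
set X := (\prod_(p <- l) p.1)%g; set Y := (\prod_(p <- l) p.2)%g.
set Z := (\prod_(p <- l) (p.1 * p.2))%g.
have SX : generated S X.
  by apply: subgroup_prod => [|p /l_gen[]//]; exact: generated_subgroup.
have -> : (x * X * (y * Y) * (x * y * Z)^-1
    = x * ((X * y * X^-1 * y^-1) * (y * (X * Y * Z^-1) * y^-1)) * x^-1)%g.
  by rewrite !invgM !mulgA !mulgVK.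
rewrite nuJ (le_trans (nuM_le _ _)) // nuJ mulrSr mulrDl mul1r [X in _ <= X]addrC.
by apply: lerD; [exact: comm_le | exact: IH].
Qed.

End PseudoNorm.

Section Growth.
Local Open Scope ring_scope.
Variable R : realType.
Implicit Types u v : R^nat.

Definition growth u : R^nat := fun n => u n / n%:R.

Lemma cvg_growth_cst (C : R) : growth (fun=> C) @ \oo --> 0.
Proof.
have inv_cvg0 : (n%:R : R)^-1 @[n --> \oo] --> 0.
  apply/gtr0_cvgV0; last exact: cvgr_idn.
  by exists 1%N => // n /= n_gt0; rewrite ltr0n.
by rewrite -(mulr0 C); apply: cvgMr.
Qed.

Lemma cvg_dist_le_invn u (l C : R) :
  (forall n, (0 < n)%N -> `|l - u n| <= C / n%:R) -> u @ \oo --> l.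
Proof.
move=> u_near; apply/cvgrPdist_le => e e_gt0.
have /cvgrPdist_le/(_ e e_gt0) := cvg_growth_cst C.
apply: filterS2 (nbhs_infty_gt 0) => n n_gt0 /=.
rewrite sub0r normrN => /(le_trans (ler_norm _)); exact/le_trans/u_near.
Qed.

Lemma lim_growth_le u v w (C : R) :
  cvg (growth u @ \oo) -> cvg (growth v @ \oo) -> cvg (growth w @ \oo) ->
  (forall n, u n <= v n + w n + C) ->
  lim (growth u @ \oo) <= lim (growth v @ \oo) + lim (growth w @ \oo).
Proof.
move=> cu cv cw uvw.
have cC := cvg_growth_cst C.
have cC' : cvg (growth (fun=> C) @ \oo) by apply/cvg_ex; exists 0.
have cvw : cvg ((fun n => growth v n + growth w n) @ \oo) by apply: is_cvgD.
have cvwC : cvg ((fun n => growth v n + growth w n + growth (fun=> C) n) @ \oo).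
  by apply: is_cvgD.
apply: (le_trans (ler_lim cu cvwC _)).
  by apply: nearW => n; rewrite /growth -!mulrDl ler_wpM2r.
rewrite (limD cvw cC') (limD cv cw) (cvg_lim _ cC) ?addr0 //.
Qed.

Lemma lim_growth_ge0 u : (forall n, 0 <= u n) -> cvg (growth u @ \oo) ->
  0 <= lim (growth u @ \oo).
Proof.
by move=> u_ge0 cu; apply: limr_ge => //; apply: nearW => n; exact: divr_ge0.
Qed.

Section Fekete.
Variable v : R^nat.
Hypothesis v_ge0 : forall n, 0 <= v n.
Hypothesis v_subadd : forall n m, v (n + m)%N <= v n + v m.

Lemma subadditive_mulnD q m r : v (q * m + r)%N <= q%:R * v m + v r.
Proof.
elim: q => [|q IH]; first by rewrite mul0n add0n mul0r add0r.
by rewrite mulSn -addnA (le_trans (v_subadd _ _)) // mulrSr mulrDl mul1r; lra.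
Qed.

Lemma growth_subadditive_le m n : (0 < m)%N -> (0 < n)%N ->
  growth v n <= growth v m + (\sum_(i < m) v i) / n%:R.
Proof.
move=> m_gt0 n_gt0; rewrite /growth.
have n_gt0' : 0 < n%:R :> R by rewrite ltr0n.
have rem_le : v (n %% m)%N <= \sum_(i < m) v i.
  by rewrite (bigD1 (Ordinal (ltn_pmod n m_gt0))) //= lerDl sumr_ge0.
have quot_le : (n %/ m)%:R * v m <= n%:R * (v m / m%:R).
  rewrite mulrCA mulrC ler_wpM2l // ler_pdivlMr ?ltr0n //.
  by rewrite -natrM ler_nat leq_trunc_div.
rewrite ler_pdivrMr // mulrDl divfK ?lt0r_neq0 // [_ * n%:R]mulrC.
by rewrite {1}(divn_eq n m) (le_trans (subadditive_mulnD _ _ _)) // lerD.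
Qed.

Lemma cvg_growth_subadditive : cvg (growth v @ \oo).
Proof.
pose E := growth v @` [set n | (0 < n)%N].
have E_inf : has_inf E.
  by split; [exists (growth v 1%N), 1%N | exists 0 => _ [n _ <-]; exact: divr_ge0].
apply/cvg_ex; exists (inf E); apply/cvgrPdist_le => e e_gt0.
have e2_gt0 : 0 < e / 2 by rewrite divr_gt0.
have [_ [m m_gt0 <-] growth_m_lt] := inf_adherent e2_gt0 E_inf.
have /cvgrPdist_le/(_ _ e2_gt0) := cvg_growth_cst (\sum_(i < m) v i).
apply: filterS2 (nbhs_infty_gt 0) => n n_gt0 /=; rewrite sub0r normrN => B_small.
have inf_le : inf E <= growth v n by apply: ge_inf; [case: E_inf | exists n].
have := growth_subadditive_le m_gt0 n_gt0; have := le_trans (ler_norm _) B_small.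
rewrite /growth in growth_m_lt inf_le * => ? ?.
by rewrite ler_norml; apply/andP; split; lra.
Qed.

End Fekete.

Lemma cvg_growth_quasi_subadditive u (C : R) : (forall n, 0 <= u n) ->
  (forall n m, u (n + m)%N <= u n + u m + C) -> cvg (growth u @ \oo).
Proof.
move=> u_ge0 u_quasi.
have cvg_shift : cvg (growth (fun n => u n + `|C|) @ \oo).
  apply: cvg_growth_subadditive => [n | n m]; first by rewrite addr_ge0.
  by have := u_quasi n m; have := ler_norm C; lra.
have -> : growth u = growth (fun n => u n + `|C|) \- growth (fun=> `|C|).
  by apply/funext => n; rewrite /growth /= mulrDl addrK.
by apply: is_cvgB => //; exact: cvgP (cvg_growth_cst _).
Qed.

Lemma truncn_scale_itv (a : R) n : 0 < a ->
  (Num.truncn (a * n%:R))%:R <= a * n%:R < (Num.truncn (a * n%:R))%:R + 1.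
Proof. by move=> a_gt0; rewrite natr1 truncn_itv // mulr_ge0 ?ler0n // ltW. Qed.

Lemma truncn_scale_ratio (a : R) : 0 < a ->
  (Num.truncn (a * n%:R))%:R / n%:R @[n --> \oo] --> a.
Proof.
move=> a_gt0; apply: (@cvg_dist_le_invn _ _ 1) => n n_gt0.
have n_gt0' : 0 < n%:R :> R by rewrite ltr0n.
have /andP[m_le m_gt] := truncn_scale_itv n a_gt0.
rewrite -[X in X - _](mulfK (lt0r_neq0 n_gt0')) -mulrBl normrM.
rewrite ger0_norm ?subr_ge0 // ger0_norm ?invr_ge0 ?ler0n //.
by rewrite ler_wpM2r ?invr_ge0 ?ler0n //; lra.
Qed.

Lemma truncn_scale_cvgy (a : R) : 0 < a ->
  Num.truncn (a * n%:R) @[n --> \oo] --> \oo.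
Proof.
move=> a_gt0; apply/cvgnyPge => A.
apply: filterS (nbhs_infty_ger ((A%:R + 1) / a)) => n.
rewrite ler_pdivrMr // mulrC => An; rewrite -(ler_nat R).
by have /andP[_ ?] := truncn_scale_itv n a_gt0; lra.
Qed.

Lemma lim_growth_scale u v (a C L : R) : 0 < a -> u 0%N = 0 ->
  growth u @ \oo --> L ->
  (forall n, `|v n - u (Num.truncn (a * n%:R))| <= C) ->
  lim (growth v @ \oo) = a * L.
Proof.
move=> a_gt0 u0 cu v_near; pose m n := Num.truncn (a * n%:R).
pose approx n := growth u (m n) * ((m n)%:R / n%:R).
have approx_cvg : approx n @[n --> \oo] --> L * a.
  apply: cvgM; last exact: truncn_scale_ratio.
  exact: cvg_comp (truncn_scale_cvgy a_gt0) cu.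
have err_cvg : (fun n => growth v n - approx n) @ \oo --> 0.
  apply: (@cvg_dist_le_invn _ _ C) => n n_gt0.
  have -> : approx n = u (m n) / n%:R.
    rewrite /approx /growth; case: (m n) => [|k]; first by rewrite u0 !mul0r.
    by rewrite mulrA mulfVK // pnatr_eq0.
  rewrite sub0r normrN /growth -mulrBl normrM [`|_^-1|]ger0_norm ?invr_ge0 ?ler0n //.
  by rewrite ler_pM2r ?invr_gt0 ?ltr0n.
apply: cvg_lim => //; rewrite mulrC -[L * a]add0r.
have -> : growth v = (fun n => growth v n - approx n + approx n).
  by apply/funext => n; rewrite subrK.
exact: cvgD.
Qed.

End Growth.

Section Floor.
Local Open Scope ring_scope.
Variable R : realType.

Lemma floor_gt (x : R) : x - 1 < (Num.floor x)%:~R.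
Proof. by rewrite ltrBlDr -intrD1 floorD1_gt. Qed.

Lemma floorD_dist (x y : R) :
  `|(Num.floor (x + y) - (Num.floor x + Num.floor y))%:~R| <= 2 :> R.
Proof.
have := floor_le x; have := floor_le y; have := floor_le (x + y).
have := floor_gt x; have := floor_gt y; have := floor_gt (x + y).
by rewrite intrB !intrD ler_norml => *; apply/andP; split; lra.
Qed.

Lemma floor_dist (x y : R) :
  `|(Num.floor x - Num.floor y)%:~R| <= `|x - y| + 1 :> R.
Proof.
have := floor_le x; have := floor_le y; have := floor_gt x; have := floor_gt y.
have := ler_norm (x - y); have := ler_norm (y - x); rewrite distrC.
by rewrite intrB ler_norml => *; apply/andP; split; lra.
Qed.

Lemma floorN_dist (x : R) : `|(Num.floor (- x) + Num.floor x)%:~R| <= 2 :> R.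
Proof.
have := floorD_dist x (- x).
by rewrite subrr floor0 sub0r intrN normrN addrC.
Qed.

End Floor.

Section Words.
Local Open Scope ring_scope.
Variables (R : realType) (G : groupType) (nu : G -> R).
Hypothesis nu_ci : is_ci_pseudonorm nu.
Implicit Types w : word R G.

Definition wprod (f : R -> int) w : G := (\prod_(p <- w) gpowz p.1 (f p.2))%g.

Definition wweight w : R := \sum_(p <- w) nu p.1.

Lemma wevalE n w : weval n w = wprod (fun s => Num.floor (s * n%:R)) w.
Proof. by rewrite /weval prod_seqE big_map. Qed.

Lemma weval_cat n w1 w2 : weval n (wconcat w1 w2) = (weval n w1 * weval n w2)%g.
Proof. by rewrite /weval /wconcat map_cat !prod_seqE big_cat. Qed.

Lemma weval_scale n a w :
  weval n (wscale a w) = wprod (fun s => Num.floor (a * s * n%:R)) w.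
Proof. by rewrite /weval /wscale prod_seqE !big_map. Qed.

Lemma weval_bar n w :
  weval n (wbar w) = wprod (fun s => Num.floor (- s * n%:R)) (rev w).
Proof. by rewrite /weval /wbar prod_seqE -map_rev !big_map. Qed.

Lemma wprod0 w : wprod (fun=> 0%R) w = 1%g.
Proof. by rewrite /wprod big1. Qed.

Lemma weval0 w : weval 0 w = 1%g.
Proof.
by rewrite wevalE -[RHS](wprod0 w); apply: eq_bigr => p _; rewrite mulr0 floor0.
Qed.

Lemma wprodV f w : (wprod f w)^-1%g = wprod (fun s => - f s) (rev w).
Proof.
rewrite /wprod -[in LHS](revK w) -prodgV.
by apply: eq_bigr => p _; rewrite gpowzN.
Qed.

Lemma weval_generated n w : generated (map fst w) (weval n w).
Proof.
rewrite wevalE; apply: subgroup_prod => [|p pw]; first exact: generated_subgroup.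
by apply/generated_gpowz/generated_mem; rewrite map_f.
Qed.

Lemma nu_wprod_div_le (f1 f2 : R -> int) (K : R -> R) w :
  (forall s, `|(f1 s - f2 s)%:~R| <= K s) ->
  nu (wprod f1 w * (wprod f2 w)^-1)%g <= \sum_(p <- w) K p.2 * nu p.1.
Proof.
move=> f12_le.
have := nu_prod_div_le nu_ci [seq (gpowz p.1 (f1 p.2), gpowz p.1 (f2 p.2)) | p <- w].
rewrite !big_map => /le_trans; apply; apply: ler_sum => p _ /=.
rewrite -gpowzN -gpowzD (le_trans (nu_gpowz_le nu_ci _ _)) //.
by rewrite ler_wpM2r ?nu_ge0.
Qed.

Lemma nu_wprod_div_le_weight (f1 f2 : R -> int) (K : R) w :
  (forall s, `|(f1 s - f2 s)%:~R| <= K) ->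
  nu (wprod f1 w * (wprod f2 w)^-1)%g <= K * wweight w.
Proof.
by move=> f12_le; rewrite /wweight mulr_sumr; apply: nu_wprod_div_le.
Qed.

(* [weval n (wbar w)] is the reversed product with exponents floor(-s n), which
   differ from the exponents -floor(s n) of [(weval n w)^-1] by at most one. *)
Lemma nu_weval_bar_le n w : nu (weval n w * weval n (wbar w))%g <= 2 * wweight w.
Proof.
have weight_rev : wweight (rev w) = wweight w by rewrite /wweight big_rev.
rewrite nuC // weval_bar -[weval n w]invgK wevalE wprodV -weight_rev.
by apply: nu_wprod_div_le_weight => s; rewrite opprK mulNr floorN_dist.
Qed.

Lemma nu_wprod_reorder_le (f1 f2 : R -> int) (D : R) w :
  commutators_bounded nu (map fst w) D ->
  nu (wprod (fun s => f1 s + f2 s) w * (wprod f1 w * wprod f2 w)^-1)%g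
    <= (size w)%:R * D.
Proof.
move=> comm_le.
pose l := [seq (gpowz p.1 (f1 p.2), gpowz p.1 (f2 p.2)) | p <- w].
have l_gen p : p \in l -> generated (map fst w) p.1 /\ generated (map fst w) p.2.
  move=> /mapP[q qw ->]; have Sq : generated (map fst w) q.1.
    by apply: generated_mem; rewrite map_f.
  by split; apply: generated_gpowz.
have prodE : (\prod_(p <- l) (p.1 * p.2))%g = wprod (fun s => f1 s + f2 s) w.
  by rewrite big_map; apply: eq_bigr => p _; rewrite gpowzD.
have := nu_prod_reorder_le nu_ci comm_le l_gen.
rewrite prodE !big_map size_map -/(wprod f1 w) -/(wprod f2 w) => reorder_le.
by rewrite -nuV // invgM invgK.
Qed.

Lemma nu_wprod_quasiadd_le (f1 f2 f3 : R -> int) (K D : R) w :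
  commutators_bounded nu (map fst w) D ->
  (forall s, `|(f3 s - (f1 s + f2 s))%:~R| <= K) ->
  nu (wprod f3 w * (wprod f1 w * wprod f2 w)^-1)%g
    <= K * wweight w + (size w)%:R * D.
Proof.
move=> comm_le f3_le.
apply: (le_trans (nu_triangle nu_ci _ (wprod (fun s => f1 s + f2 s) w) _)).
by apply: lerD; [exact: nu_wprod_div_le_weight | exact: nu_wprod_reorder_le].
Qed.

End Words.

Section NormedSpace.
Local Open Scope ring_scope.
Variables (R : realType) (G : groupType) (nu : G -> R).
Hypothesis nu_ci : is_ci_pseudonorm nu.
Hypothesis FMG : FM G.
Implicit Types w : word R G.

Lemma wnormE w : wnorm nu w = lim (growth (fun n => nu (weval n w)) @ \oo).
Proof. by []. Qed.

Lemma wnorm_cvg w : cvg (growth (fun n => nu (weval n w)) @ \oo).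
Proof.
have [D comm_le] := FM_commutator_bound nu_ci FMG (map fst w).
apply: (@cvg_growth_quasi_subadditive _ _ (2 * wweight nu w + (size w)%:R * D)).
  by move=> n; exact: nu_ge0.
move=> n m; apply: (le_trans (nu_div_le nu_ci _ (weval n w * weval m w)%g)).
rewrite addrC lerD ?nuM_le // !wevalE; apply: nu_wprod_quasiadd_le => // s.
by rewrite natrD mulrDr floorD_dist.
Qed.

Lemma wnorm_leD w v1 v2 (C : R) :
  (forall n, nu (weval n w) <= nu (weval n v1) + nu (weval n v2) + C) ->
  wnorm nu w <= wnorm nu v1 + wnorm nu v2.
Proof. by move=> wv; apply: (lim_growth_le _ _ _ wv); exact: wnorm_cvg. Qed.

Lemma wnorm_nil : wnorm nu [::] = 0.
Proof.
rewrite wnormE (_ : (fun n => _) = fun=> 0); first exact: cvg_lim (cvg_growth_cst 0).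
by apply/funext=> n; exact: nu1.
Qed.

Lemma wnorm_ge0 w : 0 <= wnorm nu w.
Proof.
rewrite wnormE; apply: (@lim_growth_ge0 R (fun n => nu (weval n w))) => [n|].
  exact: nu_ge0.
exact: wnorm_cvg.
Qed.

Lemma wnorm_le w v (C : R) :
  (forall n, nu (weval n w) <= nu (weval n v) + C) -> wnorm nu w <= wnorm nu v.
Proof.
move=> wv; rewrite -[wnorm nu v]addr0 -wnorm_nil.
by apply: (wnorm_leD (C := C)) => n; rewrite /= nu1 // addr0.
Qed.

Lemma wnorm_eq0_leD w v1 v2 (C : R) : wnorm nu v1 = 0 -> wnorm nu v2 = 0 ->
  (forall n, nu (weval n w) <= nu (weval n v1) + nu (weval n v2) + C) ->
  wnorm nu w = 0.
Proof.
move=> v1_0 v2_0 /wnorm_leD; rewrite v1_0 v2_0 addr0 => w_le0.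
by apply/le_anti; rewrite w_le0 wnorm_ge0.
Qed.

Lemma wnorm_bounded w (C : R) : (forall n, nu (weval n w) <= C) -> wnorm nu w = 0.
Proof.
move=> w_le; apply: (wnorm_eq0_leD (C := C) wnorm_nil wnorm_nil) => n.
by rewrite /= nu1 // !add0r.
Qed.

Lemma wbar_cat w1 w2 : wbar (wconcat w1 w2) = wconcat (wbar w2) (wbar w1).
Proof. by rewrite /wbar /wconcat map_cat rev_cat. Qed.

Lemma wequiv_refl w : wequiv nu w w.
Proof.
apply: (wnorm_bounded (C := 2 * wweight nu w)) => n.
by rewrite weval_cat nu_weval_bar_le.
Qed.

Lemma wequiv_sym w1 w2 : wequiv nu w1 w2 -> wequiv nu w2 w1.
Proof.
move=> w12.
apply: (wnorm_eq0_leD (C := 2 * wweight nu w1 + 2 * wweight nu w2) w12 wnorm_nil).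
move=> n; rewrite !weval_cat /= nu1 // addr0.
set X1 := weval n w1; set X2 := weval n w2.
set B1 := weval n (wbar w1); set B2 := weval n (wbar w2).
have := nu_weval_bar_le nu_ci n w1; have := nu_weval_bar_le nu_ci n w2.
have := nu_triangle nu_ci X2 B2^-1 B1; have := nu_triangle nu_ci B2^-1 X1 B1.
by rewrite invgK nuMVV //; lra.
Qed.

Lemma wequiv_trans w1 w2 w3 :
  wequiv nu w1 w2 -> wequiv nu w2 w3 -> wequiv nu w1 w3.
Proof.
move=> w12 w23; apply: (wnorm_eq0_leD (C := 2 * wweight nu w2) w12 w23) => n.
rewrite !weval_cat.
set X1 := weval n w1; set X2 := weval n w2.
set B2 := weval n (wbar w2); set B3 := weval n (wbar w3).
have := nu_weval_bar_le nu_ci n w2.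
have := nu_triangle nu_ci X1 B2^-1 B3; have := nu_triangle nu_ci B2^-1 X2 B3.
by rewrite invgK nuMVV //; lra.
Qed.

Lemma wequiv_cat w1 w1' w2 w2' : wequiv nu w1 w1' -> wequiv nu w2 w2' ->
  wequiv nu (wconcat w1 w2) (wconcat w1' w2').
Proof.
move=> w11 w22; apply: (wnorm_eq0_leD (C := 0) w11 w22) => n.
rewrite wbar_cat !weval_cat addr0 !mulgA -(mulgA (weval n w1)).
exact: nu_insert_le.
Qed.

Lemma wequiv_comm w1 w2 : wequiv nu (wconcat w1 w2) (wconcat w2 w1).
Proof.
have [D comm_le] := FM_commutator_bound nu_ci FMG (map fst (wconcat w1 w2)).
apply: (wnorm_bounded (C := D + 2 * wweight nu w1 + 2 * wweight nu w2)) => n.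
rewrite wbar_cat !weval_cat.
set X1 := weval n w1; set X2 := weval n w2.
set B1 := weval n (wbar w1); set B2 := weval n (wbar w2).
have gen_w (v : word R G) : {subset map fst v <= map fst (wconcat w1 w2)} ->
    generated (map fst (wconcat w1 w2)) (weval n v).
  by move=> sub; apply: generated_sub sub (weval_generated _ _).
have comm12 : nu (X1 * X2 * X1^-1 * X2^-1)%g <= D.
  by apply: comm_le; apply: gen_w => x; rewrite map_cat mem_cat => ->; rewrite ?orbT.
have -> : (X1 * X2 * (B1 * B2)
    = (X1 * X2 * X1^-1 * X2^-1) * (X2 * (X1 * B1) * B2))%g.
  by rewrite !mulgA mulgVK mulgVK.
have := nu_weval_bar_le nu_ci n w1; have := nu_weval_bar_le nu_ci n w2.
have := nu_insert_le nu_ci X2 B2 (X1 * B1)%g.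
have := nuM_le nu_ci (X1 * X2 * X1^-1 * X2^-1)%g (X2 * (X1 * B1) * B2)%g; lra.
Qed.

Lemma wnorm_cat_le w1 w2 : wnorm nu (wconcat w1 w2) <= wnorm nu w1 + wnorm nu w2.
Proof. by apply: (wnorm_leD (C := 0)) => n; rewrite weval_cat addr0 nuM_le. Qed.

Lemma wnorm_le_wequiv w w' : wequiv nu w w' -> wnorm nu w <= wnorm nu w'.
Proof.
move=> ww'; rewrite -[wnorm nu w']add0r -ww'.
apply: (wnorm_leD (C := 2 * wweight nu w')) => n; rewrite weval_cat.
set X := weval n w; set X' := weval n w'; set B' := weval n (wbar w').
have := nu_weval_bar_le nu_ci n w'; have := nu_div_le nu_ci X B'^-1.
have := nu_div_le nu_ci B' X'^-1.
by rewrite !invgK !nuV // (nuC nu_ci B'); lra.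
Qed.

Lemma wnorm_wequiv w w' : wequiv nu w w' -> wnorm nu w = wnorm nu w'.
Proof.
by move=> ww'; apply/le_anti; rewrite !wnorm_le_wequiv //; exact: wequiv_sym.
Qed.

Lemma wscale_cat a w1 w2 :
  wscale a (wconcat w1 w2) = wconcat (wscale a w1) (wscale a w2).
Proof. by rewrite /wscale /wconcat map_cat. Qed.

Lemma wscale_bar a w : wscale a (wbar w) = wbar (wscale a w).
Proof.
rewrite /wscale /wbar map_rev -!map_comp; congr rev.
by apply: eq_map => p /=; rewrite mulrN.
Qed.

Lemma wscaleA a b w : wscale a (wscale b w) = wscale (a * b) w.
Proof. by rewrite /wscale -map_comp; apply: eq_map => p /=; rewrite mulrA. Qed.

Lemma wscale1 w : wscale 1 w = w.
Proof.
by rewrite /wscale (eq_map (g := id)) ?map_id // => -[g s] /=; rewrite mul1r.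
Qed.

Lemma wnorm_scale_pos a w : 0 < a -> wnorm nu (wscale a w) = a * wnorm nu w.
Proof.
move=> a_gt0; rewrite wnormE.
apply: (lim_growth_scale (u := fun n => nu (weval n w))
  (C := \sum_(p <- w) (`|p.2| + 1) * nu p.1) a_gt0).
- by rewrite /= weval0 nu1.
- exact: wnorm_cvg.
move=> n; apply: (le_trans (nu_dist_le nu_ci _ _)).
rewrite weval_scale wevalE.
apply: (nu_wprod_div_le nu_ci (K := fun s => `|s| + 1)) => s.
set m := Num.truncn (a * n%:R).
have /andP[m_le m_gt] := truncn_scale_itv n a_gt0.
apply: (le_trans (floor_dist _ _)); rewrite lerD2r.
have -> : a * s * n%:R - s * m%:R = s * (a * n%:R - m%:R) by ring.
by rewrite normrM -[X in _ <= X]mulr1 ler_wpM2l // ger0_norm ?subr_ge0 //; lra.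
Qed.

Lemma wnorm_scaleN1 w : wnorm nu (wscale (-1) w) = wnorm nu w.
Proof.
suff scaleN1_le v : wnorm nu (wscale (-1) v) <= wnorm nu v.
  have wE : w = wscale (-1) (wscale (-1) w) by rewrite wscaleA mulrNN mulr1 wscale1.
  by apply/le_anti; rewrite scaleN1_le {1}wE scaleN1_le.
have [D comm_le] := FM_commutator_bound nu_ci FMG (map fst v).
apply: (wnorm_le (C := 2 * wweight nu v + (size v)%:R * D)) => n.
apply: (le_trans (nu_div_le nu_ci _ (weval n v)^-1)).
rewrite invgK nuV // addrC lerD2l -nuV // -[(_ * _)^-1%g]mul1g -(wprod0 v).
rewrite weval_scale wevalE; apply: nu_wprod_quasiadd_le => // s.
by rewrite sub0r intrN normrN mulN1r mulNr floorN_dist.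
Qed.

Lemma wnorm_scale a w : wnorm nu (wscale a w) = `|a| * wnorm nu w.
Proof.
case: (ltgtP a 0) => [a_lt0 | a_gt0 | ->].
- rewrite ltr0_norm // -wnorm_scale_pos ?oppr_gt0 //.
  by rewrite -wnorm_scaleN1 wscaleA mulN1r.
- by rewrite gtr0_norm // wnorm_scale_pos.
rewrite normr0 mul0r; apply: (wnorm_bounded (C := 0)) => n.
rewrite weval_scale -[X in _ <= X](nu1 nu_ci) -(wprod0 w).
by under eq_fun do rewrite !mul0r floor0.
Qed.

Lemma wequiv_scale a w w' : wequiv nu w w' -> wequiv nu (wscale a w) (wscale a w').
Proof.
by rewrite /wequiv -wscale_bar -wscale_cat wnorm_scale => ->; rewrite mulr0.
Qed.

Lemma wequiv_scaleD a b w :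
  wequiv nu (wscale (a + b) w) (wconcat (wscale a w) (wscale b w)).
Proof.
have [D comm_le] := FM_commutator_bound nu_ci FMG (map fst w).
apply: (wnorm_bounded (C := 2 * wweight nu w + (size w)%:R * D
  + (2 * wweight nu (wscale a w) + 2 * wweight nu (wscale b w)))) => n.
rewrite wbar_cat !weval_cat.
set Z := weval n (wscale (a + b) w).
set Xa := weval n (wscale a w); set Xb := weval n (wscale b w).
set Ba := weval n (wbar (wscale a w)); set Bb := weval n (wbar (wscale b w)).
have -> : (Z * (Bb * Ba) = (Z * (Xa * Xb)^-1) * (Xa * (Xb * Bb) * Ba))%g.
  by rewrite invgM !mulgA mulgVK mulgVK.
apply: (le_trans (nuM_le nu_ci _ _)); apply: lerD.
  rewrite /Z /Xa /Xb !weval_scale; apply: nu_wprod_quasiadd_le => // s.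
  have -> : (a + b) * s * n%:R = a * s * n%:R + b * s * n%:R by ring.
  exact: floorD_dist.
have := nu_weval_bar_le nu_ci n (wscale a w).
have := nu_weval_bar_le nu_ci n (wscale b w).
have := nu_insert_le nu_ci Xa Ba (Xb * Bb)%g; lra.
Qed.

End NormedSpace.

Theorem proposition2p3 (R : realType) (G : groupType) (nu : G -> R) :
  FM G -> is_ci_pseudonorm nu -> A_nu_normed_vector_space nu.
Proof.
move=> FMG nu_ci.
have wequiv_eq w w' : w = w' -> wequiv nu w w' by move=> ->; exact: wequiv_refl.
split; first exact: (wnorm_cvg nu_ci FMG).
split; first exact: (wequiv_refl nu_ci FMG).
split; first exact: (wequiv_sym nu_ci FMG).
split; first exact: (wequiv_trans nu_ci FMG).
split; first exact: (wequiv_cat nu_ci FMG).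
split; first exact: (wequiv_scale nu_ci FMG).
split; first by move=> w1 w2 w3; apply: wequiv_eq; rewrite /wconcat catA.
split; first exact: (wequiv_comm nu_ci FMG).
split; first by move=> w; apply: wequiv_eq.
split.
  by move=> w; exists (wbar w); rewrite /wequiv /wconcat cats0; exact: wequiv_refl.
split; first by move=> a b w; apply: wequiv_eq; rewrite wscaleA.
split; first by move=> w; apply: wequiv_eq; rewrite wscale1.
split; first by move=> a w1 w2; apply: wequiv_eq; rewrite wscale_cat.
split; first exact: (wequiv_scaleD nu_ci FMG).
split; first exact: (wnorm_wequiv nu_ci FMG).
split; first exact: (wnorm_ge0 nu_ci FMG).
split; first by move=> w; rewrite /wequiv /wconcat cats0.
split; first exact: (wnorm_scale nu_ci FMG).
exact: (wnorm_cat_le nu_ci FMG).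
Qed.
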